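(* Let $\mathbf{A}\in\mathbb{C}^{M\times N_a}$ and $\mathbf{B}\in\mathbb{C}^{M\times N_b}$ have unit-$\ell_2$-norm columns, let $\mathbf{D}=[\mathbf{A}\ \mathbf{B}]$ with coherence parameters $\mu_a,\mu_b,\mu_m$ and $\mu_d=\max\{\mu_a,\mu_b,\mu_m\}$, and assume $\mu_b\le\mu_a$. For each integer $w\ge1$ let $\delta_w$ be the smallest number such that $(1-\delta_w)\|\mathbf{w}\|_2^2\le\|\mathbf{D}\mathbf{w}\|_2^2\le(1+\delta_w)\|\mathbf{w}\|_2^2$ for all $\mathbf{w}\in\mathbb{C}^{N_a+N_b}$ with at most $w$ nonzero entries. Then $$\delta_w\le\min\left\{\frac12\Big(\mu_a(w-2)+w\sqrt{\mu_a^2+\mu_m^2}\Big),\ \mu_d(w-1)\right\}.$$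
   Context: Coherence parameters: $\mu_a=\max_{k\ne\ell}|\mathbf{a}_k^H\mathbf{a}_\ell|$, $\mu_b=\max_{k\ne\ell}|\mathbf{b}_k^H\mathbf{b}_\ell|$, $\mu_m=\max_{k,\ell}|\mathbf{a}_k^H\mathbf{b}_\ell|$, where $\mathbf{a}_k,\mathbf{b}_\ell$ are the columns of $\mathbf{A},\mathbf{B}$. *)

(* Complex numbers: an arbitrary numClosedFieldType C
   (e.g. algC); norms `|x| take real values in C. *)
From HB Require Import structures.
From mathcomp Require Import all_boot all_order all_algebra.
Set Implicit Arguments. Unset Strict Implicit. Unset Printing Implicit Defensive.
Import Order.TTheory GRing.Theory Num.Theory.
Local Open Scope ring_scope.

Definition colip (C : numClosedFieldType) (M n p : nat)
  (A : 'M[C]_(M, n)) (B : 'M[C]_(M, p)) (k : 'I_n) (l : 'I_p) : C :=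
  \sum_(i < M) (A i k)^* * B i l.

Definition norm2 (C : numClosedFieldType) (n : nat) (v : 'cV[C]_n) : C :=
  \sum_(i < n) `|v i 0| ^+ 2.

Definition unit_cols (C : numClosedFieldType) (M n : nat) (A : 'M[C]_(M, n)) :=
  forall k : 'I_n, \sum_(i < M) `|A i k| ^+ 2 = 1.

(* mu_a = max_{k <> l} |a_k^H a_l|  (0 if there is no such pair). *)
Definition self_coh (C : numClosedFieldType) (M n : nat) (A : 'M[C]_(M, n)) : C :=
  \big[Num.max/0]_(k < n) \big[Num.max/0]_(l < n | l != k) `|colip A A k l|.

Definition mutual_coh (C : numClosedFieldType) (M n p : nat)
  (A : 'M[C]_(M, n)) (B : 'M[C]_(M, p)) : C :=
  \big[Num.max/0]_(k < n) \big[Num.max/0]_(l < p) `|colip A B k l|.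

Definition nnz (C : numClosedFieldType) (n : nat) (v : 'cV[C]_n) : nat :=
  #|[set i : 'I_n | v i 0 != 0]|.

Definition rip_bound (C : numClosedFieldType) (M n : nat) (D : 'M[C]_(M, n))
  (w : nat) (d : C) :=
  forall v : 'cV[C]_n, (nnz v <= w)%N ->
    (1 - d) * norm2 v <= norm2 (D *m v) <= (1 + d) * norm2 v.

Definition is_ric (C : numClosedFieldType) (M n : nat) (D : 'M[C]_(M, n))
  (w : nat) (d : C) :=
  rip_bound D w d /\ forall d' : C, rip_bound D w d' -> d <= d'.

(* For a matrix D with Gram matrix G_jk = d_j^H d_k and any vector v,
     | ||Dv||^2 - ||v||^2 | <= sum_(j,k) |v_j| |v_k| |G_jk - [j = k]|,
   so an entrywise bound on the deviation G - I yields an RIP constant.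
   If v has s nonzero entries, Cauchy-Schwarz gives (sum_j |v_j|)^2 <= s ||v||^2.
   - Bounding every off-diagonal deviation by mu_d gives the Gershgorin-type
     bound mu_d ((sum_j |v_j|)^2 - ||v||^2) <= mu_d (w - 1) ||v||^2.
   - Splitting v = (v_A, v_B) with l1 norms a, b, squared norms P, Q and
     support sizes s_a + s_b <= w, the four Gram blocks (with mu_b <= mu_a) give
       mu_a (a^2 - P) + 2 mu_m a b + mu_a (b^2 - Q),
     and an estimate of the top eigenvalue of a 2x2 matrix bounds this by
       (mu_a (w - 2) + w sqrt(mu_a^2 + mu_m^2)) / 2 * (P + Q). *)

From HB Require Import structures.
From mathcomp Require Import all_boot all_order all_algebra.
From mathcomp Require Import ring.
Set Implicit Arguments. Unset Strict Implicit. Unset Printing Implicit Defensive.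
Import Order.TTheory GRing.Theory Num.Theory.
Local Open Scope ring_scope.

Definition gram_dev {C : numClosedFieldType} {M n : nat} (D : 'M[C]_(M, n))
  (j k : 'I_n) : C := `|colip D D j k - (j == k)%:R|.

Section GramDeviation.
Variable C : numClosedFieldType.

Lemma norm2_ge0 n (v : 'cV[C]_n) : 0 <= norm2 v.
Proof. by apply: sumr_ge0 => i _; exact: exprn_ge0. Qed.

Lemma norm2_mulmx M n (D : 'M[C]_(M, n)) (v : 'cV[C]_n) :
  norm2 (D *m v) = \sum_j \sum_k (v j 0)^* * v k 0 * colip D D j k.
Proof.
rewrite /norm2 /colip.
under eq_bigr => i _ do rewrite normCKC !mxE rmorph_sum mulr_suml.
rewrite exchange_big /=; apply: eq_bigr => j _.
under eq_bigr => i _ do rewrite mulr_sumr.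
rewrite exchange_big /=; apply: eq_bigr => k _.
rewrite mulr_sumr; apply: eq_bigr => i _.
rewrite rmorphM /=; ring.
Qed.

Lemma norm2_form n (v : 'cV[C]_n) :
  norm2 v = \sum_j \sum_k (v j 0)^* * v k 0 * (j == k)%:R.
Proof.
rewrite /norm2; apply: eq_bigr => j _.
rewrite (bigD1 j) //= eqxx mulr1 big1 ?addr0 ?normCKC // => k.
by rewrite eq_sym => /negbTE->; rewrite mulr0.
Qed.

Lemma norm2_mulmx_dev M n (D : 'M[C]_(M, n)) (v : 'cV[C]_n) :
  `|norm2 (D *m v) - norm2 v| <=
    \sum_j \sum_k `|v j 0| * `|v k 0| * gram_dev D j k.
Proof.
rewrite norm2_mulmx norm2_form -sumrB.
apply: le_trans (ler_norm_sum _ _ _) _; apply: ler_sum => j _.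
rewrite -sumrB; apply: le_trans (ler_norm_sum _ _ _) _; apply: ler_sum => k _.
by rewrite -mulrBr !normrM norm_conjC.
Qed.

Lemma rip_bound_of_dev M n (D : 'M[C]_(M, n)) w d :
  (forall v, (nnz v <= w)%N -> `|norm2 (D *m v) - norm2 v| <= d * norm2 v) ->
  rip_bound D w d.
Proof.
move=> hdev v /hdev; rewrite real_ler_norml; last first.
  by apply: realB; apply: ger0_real; exact: norm2_ge0.
case/andP => hlo hhi; rewrite mulrBl mulrDl !mul1r; apply/andP; split.
  by rewrite lerBrDl in hlo.
by rewrite lerBlDr addrC in hhi.
Qed.

Lemma nnz_sum n (v : 'cV[C]_n) :
  (nnz v)%:R = \sum_j ((v j 0 != 0) : nat)%:R :> C.
Proof.
rewrite /nnz -sum1dep_card natr_sum big_mkcond /=.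
by apply: eq_bigr => j _; case: (v j 0 != 0).
Qed.

End GramDeviation.

Section ScalarInequalities.
Variable R : numFieldType.

(* Cauchy-Schwarz for real sequences, via Lagrange's identity
   sum_(i,j) (x_i y_j - x_j y_i)^2 = 2 (sum x^2 sum y^2 - (sum x y)^2). *)
Lemma cauchy_schwarz n (x y : 'I_n -> R) :
  (forall i, x i \is Num.real) -> (forall i, y i \is Num.real) ->
  (\sum_i x i * y i) ^+ 2 <= (\sum_i x i ^+ 2) * (\sum_i y i ^+ 2).
Proof.
move=> hx hy.
set S1 := \sum_i \sum_j x i ^+ 2 * y j ^+ 2.
set S2 := \sum_i \sum_j x i * y i * (x j * y j).
have -> : (\sum_i x i ^+ 2) * (\sum_i y i ^+ 2) = S1.
  by rewrite mulr_suml; apply: eq_bigr => i _; rewrite mulr_sumr.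
have -> : (\sum_i x i * y i) ^+ 2 = S2.
  by rewrite expr2 mulr_suml; apply: eq_bigr => i _; rewrite mulr_sumr.
have S1_sym : \sum_i \sum_j x j ^+ 2 * y i ^+ 2 = S1 by rewrite exchange_big.
have S2_2 : \sum_i \sum_j 2 * (x i * y i * (x j * y j)) = 2 * S2.
  by rewrite mulr_sumr; apply: eq_bigr => i _; rewrite mulr_sumr.
have lagrange : \sum_i \sum_j (x i * y j - x j * y i) ^+ 2 = 2 * (S1 - S2).
  transitivity (\sum_i \sum_j (x i ^+ 2 * y j ^+ 2 + x j ^+ 2 * y i ^+ 2
                                - 2 * (x i * y i * (x j * y j)))).
    by apply: eq_bigr => i _; apply: eq_bigr => j _; ring.
  under eq_bigr => i _ do rewrite sumrB big_split /=.
  by rewrite sumrB big_split /= S1_sym S2_2 -/S1; ring.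
have : 0 <= 2 * (S1 - S2).
  rewrite -lagrange; apply: sumr_ge0 => i _; apply: sumr_ge0 => j _.
  by rewrite -realEsqr; apply: realB; apply: realM.
by rewrite pmulr_rge0 // subr_ge0.
Qed.

Lemma sqr_l1_le_support n (u : 'I_n -> R) :
  (\sum_j `|u j|) ^+ 2 <= (\sum_j `|u j| ^+ 2) * \sum_j ((u j != 0) : nat)%:R.
Proof.
have := cauchy_schwarz (fun j => normr_real (u j))
          (fun j => realn R (u j != 0)).
have -> : \sum_j `|u j| * ((u j != 0) : nat)%:R = \sum_j `|u j|.
  by apply: eq_bigr => j _; case: eqVneq => [->|_]; rewrite ?normr0 ?mul0r ?mulr1.
suff -> : \sum_j ((u j != 0) : nat)%:R ^+ 2 = \sum_j ((u j != 0) : nat)%:R :> R by [].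
by apply: eq_bigr => j _; case: (u j != 0); rewrite ?expr1n ?expr0n.
Qed.

Lemma sum_offdiag n (F : 'I_n -> R) j :
  \sum_k F k * (j != k)%:R = \sum_k F k - F j.
Proof.
rewrite [X in _ = X - _](bigD1 j) //= (bigD1 j) //= eqxx mulr0 add0r addrC addrK.
by apply: eq_bigr => k; rewrite eq_sym => ->; rewrite mulr1.
Qed.

Lemma offdiag_form_le n (a : 'I_n -> R) (E : 'I_n -> 'I_n -> R) m :
  (forall i, 0 <= a i) -> (forall j k, E j k <= m * (j != k)%:R) ->
  \sum_j \sum_k a j * a k * E j k <= m * ((\sum_j a j) ^+ 2 - \sum_j a j ^+ 2).
Proof.
move=> ha hE.
apply: (@le_trans _ _ (\sum_j \sum_k a j * a k * m * (j != k)%:R)).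
  apply: ler_sum => j _; apply: ler_sum => k _.
  by rewrite -[leRHS]mulrA ler_wpM2l ?mulr_ge0.
rewrite le_eqVlt; apply/predU1P; left.
under eq_bigr => j _ do rewrite sum_offdiag.
rewrite sumrB expr2 mulr_suml mulrBr; congr (_ - _).
  rewrite mulr_sumr; apply: eq_bigr => j _; rewrite !mulr_sumr.
  by apply: eq_bigr => k _; ring.
by rewrite mulr_sumr; apply: eq_bigr => j _; ring.
Qed.

Lemma bilinear_form_le n p (a : 'I_n -> R) (b : 'I_p -> R) (E : 'I_n -> 'I_p -> R) m :
  (forall i, 0 <= a i) -> (forall i, 0 <= b i) -> (forall j k, E j k <= m) ->
  \sum_j \sum_k a j * b k * E j k <= m * ((\sum_j a j) * (\sum_k b k)).
Proof.
move=> ha hb hE; rewrite mulr_suml mulr_sumr; apply: ler_sum => j _.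
rewrite !mulr_sumr; apply: ler_sum => k _.
by rewrite [leRHS]mulrC ler_wpM2l ?mulr_ge0.
Qed.

Lemma sqr_le (x y : R) : 0 <= x -> 0 <= y -> x ^+ 2 <= y ^+ 2 -> x <= y.
Proof. by move=> hx hy; rewrite (@ler_pXn2r _ 2) // nnegrE. Qed.

Lemma sqr_real_ge0 (x : R) : x \is Num.real -> 0 <= x ^+ 2.
Proof. by rewrite -realEsqr. Qed.

Lemma am_gm (c u v : R) :
  0 <= c -> 0 <= u -> 0 <= v -> c ^+ 2 <= u * v -> 2 * c <= u + v.
Proof.
move=> c0 u0 v0 hc; apply: sqr_le; rewrite ?mulr_ge0 ?addr_ge0 //.
apply: (@le_trans _ _ (4 * (u * v))).
  by rewrite exprMn (_ : 2 ^+ 2 = 4) ?ler_wpM2l ?ler0n //; ring.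
rewrite -subr_ge0 (_ : _ - _ = (u - v) ^+ 2); last by ring.
by apply: sqr_real_ge0; apply: realB; apply: ger0_real.
Qed.

(* The 2x2 eigenvalue estimate, in product form: with r^2 = ma^2 + mm^2 and
   T = w (ma + r) / 2 for w >= sa + sb, the matrix
   [[T - ma sa, mm sqrt(sa sb)], [mm sqrt(sa sb), T - ma sb]] is nonnegative
   definite. *)
Lemma coupling_bound (ma mm r sa sb w : R) :
  0 <= ma -> 0 <= mm -> 0 <= r -> r ^+ 2 = ma ^+ 2 + mm ^+ 2 ->
  0 <= sa -> 0 <= sb -> sa + sb <= w ->
  let T := 2^-1 * (w * (ma + r)) in
  [/\ 0 <= T - ma * sa, 0 <= T - ma * sb
    & mm ^+ 2 * (sa * sb) <= (T - ma * sa) * (T - ma * sb)].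
Proof.
move=> ma0 mm0 r0 hr sa0 sb0 hw T.
have rma0 : 0 <= r - ma.
  by rewrite subr_ge0 sqr_le // hr lerDl exprn_ge0.
have mar0 : 0 <= ma + r by rewrite addr_ge0.
have i20 : 0 <= (2^-1 : R) by rewrite invr_ge0 ler0n.
set X0 := 2^-1 * (sb * (ma + r) + sa * (r - ma)).
set Y0 := 2^-1 * (sa * (ma + r) + sb * (r - ma)).
have X00 : 0 <= X0 by apply: mulr_ge0 => //; apply: addr_ge0; apply: mulr_ge0.
have Y00 : 0 <= Y0 by apply: mulr_ge0 => //; apply: addr_ge0; apply: mulr_ge0.
have slack : 0 <= 2^-1 * (ma + r) * (w - (sa + sb)).
  by apply: mulr_ge0; [exact: mulr_ge0 | rewrite subr_ge0].
have hX : X0 <= T - ma * sa.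
  rewrite -subr_ge0 (_ : _ - _ = 2^-1 * (ma + r) * (w - (sa + sb))) //.
  by rewrite /T /X0; field.
have hY : Y0 <= T - ma * sb.
  rewrite -subr_ge0 (_ : _ - _ = 2^-1 * (ma + r) * (w - (sa + sb))) //.
  by rewrite /T /Y0; field.
split; [exact: le_trans hX | exact: le_trans hY |].
apply: le_trans (ler_pM X00 Y00 hX hY).
rewrite -subr_ge0 (_ : _ - _ = 2^-1 * 2^-1 *
    (4 * sa * sb * ma ^+ 2 + mm ^+ 2 * (sa - sb) ^+ 2
     + (sa + sb) ^+ 2 * (r ^+ 2 - ma ^+ 2 - mm ^+ 2))); last by rewrite /X0 /Y0; field.
rewrite hr (_ : _ - _ - _ = 0) ?mulr0 ?addr0; last by ring.
have sq0 : 0 <= (sa - sb) ^+ 2 by apply: sqr_real_ge0; apply: realB; apply: ger0_real.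
apply: mulr_ge0; first by apply: mulr_ge0.
apply: addr_ge0; last exact: mulr_ge0 (exprn_ge0 _ mm0) sq0.
by rewrite !mulr_ge0 ?ler0n.
Qed.

(* The scalar form of the two-block estimate: a, b are l1 norms, P, Q squared
   l2 norms and sa, sb support sizes of the two halves of a vector. *)
Lemma two_block_bound (ma mm r a b P Q sa sb w : R) :
  0 <= ma -> 0 <= mm -> 0 <= r -> r ^+ 2 = ma ^+ 2 + mm ^+ 2 ->
  0 <= a -> 0 <= b -> 0 <= P -> 0 <= Q ->
  a ^+ 2 <= P * sa -> b ^+ 2 <= Q * sb -> 0 <= sa -> 0 <= sb -> sa + sb <= w ->
  ma * (a ^+ 2 - P) + 2 * mm * (a * b) + ma * (b ^+ 2 - Q)
    <= 2^-1 * (ma * (w - 2) + w * r) * (P + Q).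
Proof.
move=> ma0 mm0 r0 hr a0 b0 P0 Q0 ha hb sa0 sb0 hw.
have [X0 Y0 hXY] := coupling_bound ma0 mm0 r0 hr sa0 sb0 hw.
set X := _ - ma * sa in X0 hXY *; set Y := _ - ma * sb in Y0 hXY *.
have cross : 2 * (mm * (a * b)) <= X * P + Y * Q.
  apply: am_gm; rewrite ?mulr_ge0 //.
  apply: (@le_trans _ _ (mm ^+ 2 * (sa * sb) * (P * Q))).
    rewrite exprMn (_ : _ * (P * Q) = mm ^+ 2 * ((P * sa) * (Q * sb))); last by ring.
    by rewrite ler_wpM2l ?exprn_ge0 // exprMn ler_pM ?exprn_ge0.
  rewrite (_ : X * P * (Y * Q) = X * Y * (P * Q)); last by ring.
  by rewrite ler_wpM2r ?mulr_ge0.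
rewrite (_ : 2^-1 * _ * _ = ma * (P * sa) + ma * (Q * sb) + (X * P + Y * Q)
                            - ma * (P + Q)); last by rewrite /X /Y; field.
rewrite (_ : ma * _ + _ + _ = ma * a ^+ 2 + ma * b ^+ 2 + 2 * (mm * (a * b))
                              - ma * (P + Q)); last by ring.
by rewrite lerD2r !lerD ?ler_wpM2l.
Qed.

End ScalarInequalities.

Section RealMaxima.
Variable R : numDomainType.

(* Each of three nonnegative numbers lies below their maximum; the order on R
   is only partial, so comparability comes from realness. *)
Lemma le_max3 (x y z : R) : 0 <= x -> 0 <= y -> 0 <= z ->
  [/\ x <= Num.max x (Num.max y z), y <= Num.max x (Num.max y z)
    & z <= Num.max x (Num.max y z)].
Proof.
move=> x0 y0 z0; rewrite !comparable_le_max ?lexx ?orbT //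
  ?real_comparable ?max_real ?ger0_real //.
Qed.

Lemma bigmax_ge0 (I : Type) (r : seq I) (P : pred I) (F : I -> R) :
  (forall i, F i \is Num.real) -> 0 <= \big[Num.max/0]_(i <- r | P i) F i.
Proof.
move=> hF; elim/big_rec: _ => // i x _ hx.
by rewrite comparable_le_max ?hx ?orbT // real_comparable ?hF ?ger0_real.
Qed.

Lemma le_bigmax (n : nat) (P : pred 'I_n) (F : 'I_n -> R) i :
  (forall i, F i \is Num.real) -> P i -> F i <= \big[Num.max/0]_(j < n | P j) F j.
Proof.
move=> hF Pi; have : i \in index_enum 'I_n by rewrite mem_index_enum.
elim: (index_enum _) => // j r IH; rewrite inE big_cons.
have r_real : \big[Num.max/0]_(k <- r | P k) F k \is Num.real.
  by apply: bigmax_real => // k _; exact: hF.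
case: ifP => Pj /predU1P [ij | /IH le_rest] //; last by rewrite ij Pj in Pi.
  by rewrite ij comparable_le_max ?real_comparable ?hF ?lexx.
by rewrite comparable_le_max ?real_comparable ?hF ?le_rest ?orbT.
Qed.

End RealMaxima.

Section Coherence.
Variable C : numClosedFieldType.

Lemma inner_max_real M n p (A : 'M[C]_(M, n)) (B : 'M[C]_(M, p))
    (Q : 'I_n -> pred 'I_p) k :
  \big[Num.max/0]_(l < p | Q k l) `|colip A B k l| \is Num.real.
Proof. by apply: bigmax_real => // l _; exact: normr_real. Qed.

Lemma self_coh_ge0 M n (A : 'M[C]_(M, n)) : 0 <= self_coh A.
Proof. exact: bigmax_ge0 (inner_max_real A A (fun k l => l != k)). Qed.

Lemma mutual_coh_ge0 M n p (A : 'M[C]_(M, n)) (B : 'M[C]_(M, p)) :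
  0 <= mutual_coh A B.
Proof. exact: bigmax_ge0 (inner_max_real A B (fun _ _ => true)). Qed.

Lemma self_coh_le M n (A : 'M[C]_(M, n)) k l :
  l != k -> `|colip A A k l| <= self_coh A.
Proof.
move=> hlk; apply: le_trans (le_bigmax (inner_max_real A A (fun k l => l != k)) isT).
by apply: le_bigmax hlk => j; exact: normr_real.
Qed.

Lemma mutual_coh_le M n p (A : 'M[C]_(M, n)) (B : 'M[C]_(M, p)) k l :
  `|colip A B k l| <= mutual_coh A B.
Proof.
apply: le_trans (le_bigmax (inner_max_real A B (fun _ _ => true)) isT).
by apply: (le_bigmax (P := xpredT)) => // j; exact: normr_real.
Qed.

Lemma colip_unit M n (A : 'M[C]_(M, n)) k : unit_cols A -> colip A A k k = 1.
Proof. by move=> hA; rewrite /colip -(hA k); apply: eq_bigr => i _; rewrite normCKC. Qed.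

Lemma colip_conj M n p (A : 'M[C]_(M, n)) (B : 'M[C]_(M, p)) k l :
  colip B A l k = (colip A B k l)^*.
Proof.
rewrite /colip rmorph_sum; apply: eq_bigr => i _.
by rewrite rmorphM /= conjCK mulrC.
Qed.

Lemma gram_dev_self M n (A : 'M[C]_(M, n)) j k :
  unit_cols A -> gram_dev A j k <= self_coh A * (j != k)%:R.
Proof.
rewrite /gram_dev => hA; case: (eqVneq j k) => [->|hjk] /=.
  by rewrite colip_unit // subrr normr0 mulr0.
by rewrite subr0 mulr1; apply: self_coh_le; rewrite eq_sym.
Qed.

End Coherence.

Section ConcatenatedDictionary.
Variable C : numClosedFieldType.
Variables (M Na Nb : nat) (A : 'M[C]_(M, Na)) (B : 'M[C]_(M, Nb)).
Hypotheses (hA : unit_cols A) (hB : unit_cols B).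

Let D := row_mx A B.
Let mu_a := self_coh A.
Let mu_b := self_coh B.
Let mu_m := mutual_coh A B.

Lemma gram_dev_ll j k :
  gram_dev D (lshift Nb j) (lshift Nb k) <= mu_a * (j != k)%:R.
Proof.
rewrite /gram_dev eq_shift (_ : colip D D _ _ = colip A A j k).
  exact: (gram_dev_self j k hA).
by apply: eq_bigr => i _; rewrite !row_mxEl.
Qed.

Lemma gram_dev_rr j k :
  gram_dev D (rshift Na j) (rshift Na k) <= mu_b * (j != k)%:R.
Proof.
rewrite /gram_dev eq_shift (_ : colip D D _ _ = colip B B j k).
  exact: (gram_dev_self j k hB).
by apply: eq_bigr => i _; rewrite !row_mxEr.
Qed.

Lemma gram_dev_lr j k : gram_dev D (lshift Nb j) (rshift Na k) <= mu_m.
Proof.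
rewrite /gram_dev eq_lrshift subr0 (_ : colip D D _ _ = colip A B j k).
  exact: mutual_coh_le.
by apply: eq_bigr => i _; rewrite row_mxEl row_mxEr.
Qed.

Lemma gram_dev_rl j k : gram_dev D (rshift Na j) (lshift Nb k) <= mu_m.
Proof.
rewrite /gram_dev eq_rlshift subr0 (_ : colip D D _ _ = colip B A j k).
  by rewrite colip_conj norm_conjC; exact: mutual_coh_le.
by apply: eq_bigr => i _; rewrite row_mxEl row_mxEr.
Qed.

Lemma coh_ge0 : [/\ 0 <= mu_a, 0 <= mu_b & 0 <= mu_m].
Proof. by rewrite !self_coh_ge0 mutual_coh_ge0. Qed.

Lemma rip_gershgorin (w : nat) :
  rip_bound D w (Num.max mu_a (Num.max mu_b mu_m) * (w%:R - 1)).
Proof.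
set mu_d := Num.max _ _; have [ma0 mb0 mm0] := coh_ge0.
have [hda hdb hdm] := le_max3 ma0 mb0 mm0.
have md0 : 0 <= mu_d := le_trans ma0 hda.
have hE j k : gram_dev D j k <= mu_d * (j != k)%:R.
  rewrite -(splitK j) -(splitK k).
  case: (split j) => j'; case: (split k) => k' /=.
  - by rewrite eq_shift (le_trans (gram_dev_ll j' k')) ?ler_wpM2r.
  - by rewrite eq_lrshift mulr1 (le_trans (gram_dev_lr j' k')).
  - by rewrite eq_rlshift mulr1 (le_trans (gram_dev_rl j' k')).
  - by rewrite eq_shift (le_trans (gram_dev_rr j' k')) ?ler_wpM2r.
apply: rip_bound_of_dev => v hv.
apply: le_trans (norm2_mulmx_dev D v) _.
apply: le_trans (offdiag_form_le (fun j => normr_ge0 (v j 0)) hE) _.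
have l1_le : (\sum_j `|v j 0|) ^+ 2 <= norm2 v * w%:R.
  apply: le_trans (sqr_l1_le_support _) _.
  by rewrite -nnz_sum ler_wpM2l ?norm2_ge0 ?ler_nat.
rewrite -/(norm2 v) (_ : _ * (_ - 1) * _ = mu_d * (norm2 v * w%:R - norm2 v)).
  by rewrite ler_wpM2l // lerD2r.
by ring.
Qed.

Lemma rip_two_block (w : nat) : mu_b <= mu_a ->
  rip_bound D w (2^-1 * (mu_a * (w%:R - 2) + w%:R * sqrtC (mu_a ^+ 2 + mu_m ^+ 2))).
Proof.
move=> hab; have [ma0 mb0 mm0] := coh_ge0.
set r := sqrtC _.
have r0 : 0 <= r by rewrite sqrtC_ge0 addr_ge0 ?exprn_ge0.
have hr : r ^+ 2 = mu_a ^+ 2 + mu_m ^+ 2 by rewrite sqrtCK.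
apply: rip_bound_of_dev => v hv.
pose vA (j : 'I_Na) : C := v (lshift Nb j) 0.
pose vB (j : 'I_Nb) : C := v (rshift Na j) 0.
pose a := \sum_j `|vA j|; pose b := \sum_j `|vB j|.
pose P := \sum_j `|vA j| ^+ 2; pose Q := \sum_j `|vB j| ^+ 2.
pose sa : C := \sum_j ((vA j != 0) : nat)%:R.
pose sb : C := \sum_j ((vB j != 0) : nat)%:R.
have supp : sa + sb <= w%:R.
  by move: hv; rewrite -(ler_nat C) nnz_sum big_split_ord.
have normPQ : norm2 v = P + Q by rewrite /norm2 big_split_ord.
have nneg n (F : 'I_n -> C) : (forall i, 0 <= F i) -> 0 <= \sum_i F i.
  by move=> hF; apply: sumr_ge0 => i _.
have vA0 j : 0 <= `|vA j| by [].
have vB0 j : 0 <= `|vB j| by [].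
(* The B-block deviation, with mu_b weakened to mu_a. *)
have hE_rr j k : gram_dev D (rshift Na j) (rshift Na k) <= mu_a * (j != k)%:R.
  by rewrite (le_trans (gram_dev_rr j k)) ?ler_wpM2r.
have blocks : \sum_j \sum_k `|v j 0| * `|v k 0| * gram_dev D j k
    <= mu_a * (a ^+ 2 - P) + 2 * mu_m * (a * b) + mu_a * (b ^+ 2 - Q).
  under eq_bigr => j _ do rewrite big_split_ord /=.
  rewrite big_split_ord /= !big_split /=.
  rewrite (_ : _ + _ + _ = mu_a * (a ^+ 2 - P) + mu_m * (a * b)
                          + (mu_m * (b * a) + mu_a * (b ^+ 2 - Q))); last by ring.
  apply: lerD; apply: lerD.
  - exact: offdiag_form_le vA0 gram_dev_ll.
  - exact: bilinear_form_le vA0 vB0 gram_dev_lr.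
  - exact: bilinear_form_le vB0 vA0 gram_dev_rl.
  - exact: offdiag_form_le vB0 hE_rr.
apply: le_trans (norm2_mulmx_dev D v) (le_trans blocks _).
rewrite normPQ; apply: (two_block_bound ma0 mm0 r0 hr _ _ _ _
   (sqr_l1_le_support vA) (sqr_l1_le_support vB) _ _ supp); apply: nneg => // i.
- exact: exprn_ge0.
- exact: exprn_ge0.
Qed.

End ConcatenatedDictionary.

Theorem lemma2 (C : numClosedFieldType) (M Na Nb : nat)
  (A : 'M[C]_(M, Na)) (B : 'M[C]_(M, Nb))
  (hA : unit_cols A) (hB : unit_cols B)
  (hab : self_coh B <= self_coh A)
  (w : nat) (hw : (1 <= w)%N) (delta : C)
  (hdelta : is_ric (row_mx A B) w delta) :
  let mu_a := self_coh A in
  let mu_b := self_coh B in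
  let mu_m := mutual_coh A B in
  let mu_d := Num.max mu_a (Num.max mu_b mu_m) in
  delta <= Num.min
    (2^-1 * (mu_a * (w%:R - 2) + w%:R * sqrtC (mu_a ^+ 2 + mu_m ^+ 2)))
    (mu_d * (w%:R - 1)).
Proof.
have [_ least] := hdelta.
have h_block := least _ (rip_two_block hA hB hab).
have h_gersh := least _ (rip_gershgorin (w := w) hA hB).
by cbv zeta; rewrite /Order.min; case: ifP.
Qed.
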